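(* In the category $\mathrm{Vect}$ of vector spaces over a field and linear maps, the (surjective, injective) = (epi, mono) factorisation system is costable, i.e. monomorphisms are stable under pushout. Moreover, the assignment that is the identity on objects and sends an epi-mono corelation $U\xrightarrow{f}A\xleftarrow{g}V$ to the linear subspace $\ker[f\ \ -g]\subseteq U\oplus V$ is a full, faithful, bijective-on-objects functor $\mathrm{Corel}_{(\mathrm{Epi},\mathrm{Mono})}(\mathrm{Vect})\to\mathrm{LinRel}$; in particular these categories are isomorphic.
   Context: A factorisation system is costable if its right class is stable under pushout. For a factorisation system $(\mathcal E,\mathcal M)$ on a category with finite colimits, $\mathrm{Corel}_{(\mathcal E,\mathcal M)}$ has morphisms isomorphism classes of cospans $X\xrightarrow{i}N\xleftarrow{o}Y$ with $[i,o]\colon X+Y\to N$ in $\mathcal E$, composed by forming the pushout composite cospan $X\to N+_YM\leftarrow Z$ and then replacing the apex by the image $\overline{N+_YM}$ of the copairing $X+Z\to N+_YM$ (i.e. taking the $\mathcal E$ factor of its $(\mathcal E,\mathcal M)$-factorisation). $\mathrm{LinRel}$ is the category of vector spaces and linear relations $L\subseteq U\oplus V$, composed as relations: $(u,w)\in L;L'$ iff there is $v$ with $(u,v)\in L$, $(v,w)\in L'$. *)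

From HB Require Import structures.
From mathcomp Require Import all_boot all_order all_algebra.
Set Implicit Arguments. Unset Strict Implicit. Unset Printing Implicit Defensive.
Import GRing.Theory.
Local Open Scope ring_scope.

Section Defs.
Variable F : fieldType.

Definition is_pushout (A B C D : lmodType F)
  (f : {linear A -> B}) (g : {linear A -> C})
  (p : {linear B -> D}) (q : {linear C -> D}) : Prop :=
  (forall a, p (f a) = q (g a)) /\
  forall (E : lmodType F) (h : {linear B -> E}) (k : {linear C -> E}),
    (forall a, h (f a) = k (g a)) ->
    (exists u : {linear D -> E},
        (forall b, u (p b) = h b) /\ (forall c, u (q c) = k c)) /\
    (forall u1 u2 : {linear D -> E},
        (forall b, u1 (p b) = h b) -> (forall c, u1 (q c) = k c) ->
        (forall b, u2 (p b) = h b) -> (forall c, u2 (q c) = k c) ->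
        forall d, u1 d = u2 d).

(* An epi-mono corelation U -> N <- V : the copairing [i, o] : U (+) V -> N
   is surjective (lies in the class E of epimorphisms). *)
Record corel (U V : lmodType F) := Corel {
  apex : lmodType F;
  cin : {linear U -> apex};
  cout : {linear V -> apex};
  corel_epi : forall n : apex, exists u v, n = cin u + cout v }.

(* Isomorphism of cospans (morphisms of Corel are iso classes). *)
Definition corel_iso (U V : lmodType F) (c1 c2 : corel U V) : Prop :=
  exists phi : {linear apex c1 -> apex c2},
    bijective phi /\ (forall u, phi (cin c1 u) = cin c2 u) /\
    (forall v, phi (cout c1 v) = cout c2 v).

Lemma corel_id_epi (U : lmodType F) :
  forall n : U, exists u v, n = (@idfun U : {linear U -> U}) u + (@idfun U : {linear U -> U}) v.
Proof. by move=> n; exists n, 0; rewrite /= addr0. Qed.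

Definition corel_id (U : lmodType F) : corel U U :=
  @Corel U U U idfun idfun (@corel_id_epi U).

(* c3 is the Corel-composite of c1 : U -> V and c2 : V -> W:
   there is a pushout Q of  apex c1 <- V -> apex c2  and an injective
   (mono) linear m : apex c3 -> Q such that  U -> apex c3 -> W  followed by m
   is the pushout composite cospan; i.e. apex c3 (whose legs are jointly
   surjective) is the image of the copairing U (+) W -> Q. *)
Definition is_corel_comp (U V W : lmodType F)
  (c1 : corel U V) (c2 : corel V W) (c3 : corel U W) : Prop :=
  exists (Q : lmodType F) (p : {linear apex c1 -> Q}) (q : {linear apex c2 -> Q})
         (m : {linear apex c3 -> Q}),
    is_pushout (cout c1) (cin c2) p q /\ injective m /\
    (forall u, m (cin c3 u) = p (cin c1 u)) /\
    (forall w, m (cout c3 w) = q (cout c2 w)).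

Definition linrel (U V : lmodType F) := U -> V -> Prop.

Definition is_linrel (U V : lmodType F) (L : linrel U V) : Prop :=
  L 0 0 /\ forall (a : F) u v u' v', L u v -> L u' v' -> L (a *: u + u') (a *: v + v').

Definition linrel_eq (U V : lmodType F) (L L' : linrel U V) : Prop :=
  forall u v, L u v <-> L' u v.

Definition linrel_comp (U V W : lmodType F) (L : linrel U V) (L' : linrel V W) : linrel U W :=
  fun u w => exists v, L u v /\ L' v w.

Definition linrel_id (U : lmodType F) : linrel U U := fun u v => u = v.

Definition corel_to_linrel (U V : lmodType F) (c : corel U V) : linrel U V :=
  fun u v => cin c u - cout c v = 0.

End Defs.

(* Quotients by subspaces exist in Vect, so every linear map factors as a
   surjection followed by an injection, and the pushout of B <-f- A -g-> C is
   (B * C) / {(f a, - g a)}.  In any pushout, p b = q c therefore forces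
   (b, c) = (f a, g a); this gives costability, and it identifies the relation
   of a Corel-composite with the relational composite.  A corelation
   U -> N <- V is, up to isomorphism, the quotient of U * V by the kernel of
   its copairing, which is its relation with V negated: hence corelations with
   equal relations are isomorphic, and every linear relation L is the relation
   of the quotient of U * V by {(u, - v) | L u v}. *)

From HB Require Import structures.
From mathcomp Require Import all_boot all_algebra ring_quotient.
From mathcomp Require Import boolp.
Set Implicit Arguments. Unset Strict Implicit. Unset Printing Implicit Defensive.
Import GRing.Theory.
Local Open Scope ring_scope.
Local Open Scope quotient_scope.

Definition subspace (R : pzRingType) (X : lmodType R) (P : X -> Prop) : Prop :=
  P 0 /\ forall a x y, P x -> P y -> P (a *: x + y).

Section Cokernel.
Variables (R : pzRingType) (X : lmodType R) (P : X -> Prop).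
Hypothesis subP : subspace P.

Definition subspace_pred : {pred X} := fun x => `[< P x >].

Lemma subspace_predZ a x : x \in subspace_pred -> a *: x \in subspace_pred.
Proof.
by case: subP => P0 PL /asboolP Px; apply/asboolP; rewrite -[_ *: _]addr0; apply: PL.
Qed.

Lemma subspace_pred_zmod_closed : zmod_closed subspace_pred.
Proof.
case: subP => P0 PL; split; first exact/asboolP.
move=> x y /asboolP Px /asboolP Py; apply/asboolP.
by rewrite addrC -scaleN1r; apply: PL.
Qed.

HB.instance Definition _ :=
  GRing.isZmodClosed.Build X subspace_pred subspace_pred_zmod_closed.

Local Notation quotX := (Quotient.quot subspace_pred).

Definition quot_scale (a : R) := lift_op1 quotX ( *:%R a).

Lemma pi_scale a : {morph \pi_quotX : x / a *: x >-> quot_scale a x}.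
Proof.
move=> x; unlock quot_scale; apply/eqP; rewrite piE Quotient.equivE.
by rewrite -scalerBr subspace_predZ // Quotient.idealrBE reprK.
Qed.
Canonical pi_scale_morph a := PiMorph1 (pi_scale a).

Lemma quot_scaleA a b (q : quotX) : quot_scale a (quot_scale b q) = quot_scale (a * b) q.
Proof. by rewrite -[q]reprK !piE scalerA. Qed.

Lemma quot_scale1 : left_id 1 quot_scale.
Proof. by move=> q; rewrite -[q]reprK !piE scale1r. Qed.

Lemma quot_scaleDr : right_distributive quot_scale +%R.
Proof. by move=> a p q; rewrite -[p]reprK -[q]reprK !piE scalerDr. Qed.

Lemma quot_scaleDl (q : quotX) : {morph quot_scale^~ q : a b / a + b}.
Proof. by move=> a b; rewrite -[q]reprK !piE scalerDl. Qed.

HB.instance Definition _ := GRing.Zmodule_isLmodule.Build R quotX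
  quot_scaleA quot_scale1 quot_scaleDr quot_scaleDl.

Lemma pi_quot_linear : linear \pi_quotX.
Proof. by move=> a x y; rewrite !piE. Qed.

HB.instance Definition _ := GRing.isLinear.Build R X quotX *:%R \pi_quotX pi_quot_linear.

Lemma cokernel_exists : exists (Y : lmodType R) (pi : {linear X -> Y}),
  (forall q, exists x, q = pi x) /\ (forall x, pi x = 0 <-> P x).
Proof.
exists quotX, \pi_quotX; split=> [q|x]; first by exists (repr q); exact/esym/reprK.
have -> : (0 : quotX) = \pi_quotX 0 by rewrite piE.
split=> [/eqP | Px]; last apply/eqP; rewrite piE Quotient.equivE subr0.
  by move/asboolP.
exact/asboolP.
Qed.

End Cokernel.

Section LinearAlgebra.
Variable R : pzRingType.
Implicit Types X Y Z : lmodType R.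

Lemma subspace_kernel X Y (phi : {linear X -> Y}) : subspace (fun x => phi x = 0).
Proof.
split=> [|a x y px py]; first exact: linear0.
by rewrite linearP px py scaler0 addr0.
Qed.

Lemma linear_factor_surj X Y Z (s : {linear X -> Y}) (t : {linear X -> Z}) :
  (forall y, exists x, y = s x) -> (forall x, s x = 0 -> t x = 0) ->
  exists h : {linear Y -> Z}, forall x, h (s x) = t x.
Proof.
move=> s_surj st.
pose h y := t (sval (cid (s_surj y))).
have hE x : h (s x) = t x.
  rewrite /h; case: cid => x' /= sx; apply/subr0_eq; rewrite -linearB.
  by apply: st; rewrite linearB -sx subrr.
have h_linear : linear h.
  move=> a y1 y2; have [x1 ->] := s_surj y1; have [x2 ->] := s_surj y2.
  by rewrite -linearP !hE linearP.
pose hL : {linear Y -> Z} := HB.pack h (GRing.isLinear.Build R Y Z *:%R h h_linear).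
by exists hL.
Qed.

Lemma epi_mono_factorisation X Y (phi : {linear X -> Y}) :
  exists (I : lmodType R) (e : {linear X -> I}) (m : {linear I -> Y}),
    [/\ forall i, exists x, i = e x, injective m & forall x, m (e x) = phi x].
Proof.
have [I [e [e_surj e0]]] := cokernel_exists (subspace_kernel phi).
have [m me] := linear_factor_surj e_surj (fun x => (e0 x).1).
exists I, e, m; split=> // i j.
have [x ->] := e_surj i; have [y ->] := e_surj j.
rewrite !me => phi_xy; apply/subr0_eq; rewrite -linearB.
by apply/e0; rewrite linearB phi_xy subrr.
Qed.

Lemma linear_surj_iso X Y Z (s : {linear X -> Y}) (t : {linear X -> Z}) :
  (forall y, exists x, y = s x) -> (forall z, exists x, z = t x) ->
  (forall x, s x = 0 <-> t x = 0) ->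
  exists phi : {linear Y -> Z}, bijective phi /\ forall x, phi (s x) = t x.
Proof.
move=> s_surj t_surj st.
have [phi phiE] := linear_factor_surj s_surj (fun x => (st x).1).
have [psi psiE] := linear_factor_surj t_surj (fun x => (st x).2).
exists phi; split=> //; exists psi => [y|z].
  by have [x ->] := s_surj y; rewrite phiE psiE.
by have [x ->] := t_surj z; rewrite psiE phiE.
Qed.

Definition lin_inl X Y (x : X) : X * Y := (x, 0).
Definition lin_inr X Y (y : Y) : X * Y := (0, y).
#[local] Arguments lin_inl {X Y}.
#[local] Arguments lin_inr {X Y}.

Lemma lin_inl_linear X Y : linear (@lin_inl X Y).
Proof. by move=> a x y; rewrite [RHS]surjective_pairing /= scaler0 addr0. Qed.

Lemma lin_inr_linear X Y : linear (@lin_inr X Y).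
Proof. by move=> a x y; rewrite [RHS]surjective_pairing /= scaler0 addr0. Qed.

HB.instance Definition _ X Y :=
  GRing.isLinear.Build R X (X * Y)%type *:%R (@lin_inl X Y) (@lin_inl_linear X Y).
HB.instance Definition _ X Y :=
  GRing.isLinear.Build R Y (X * Y)%type *:%R (@lin_inr X Y) (@lin_inr_linear X Y).

Lemma copair_linear X Y Z (f : {linear X -> Z}) (g : {linear Y -> Z}) :
  linear (fun x : X * Y => f x.1 + g x.2).
Proof. by move=> a x y; rewrite /= !linearP scalerDr addrACA. Qed.

Definition copair X Y Z (f : {linear X -> Z}) (g : {linear Y -> Z})
  : {linear (X * Y)%type -> Z} :=
  HB.pack (fun x : X * Y => f x.1 + g x.2)
    (GRing.isLinear.Build R (X * Y)%type Z *:%R _ (copair_linear f g)).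

Lemma copairE X Y Z (f : {linear X -> Z}) (g : {linear Y -> Z}) x :
  copair f g x = f x.1 + g x.2.
Proof. by []. Qed.

Lemma pair_split X Y (x : X * Y) : x = lin_inl x.1 + lin_inr x.2.
Proof. by case: x => x y; rewrite [RHS]surjective_pairing /= addr0 add0r. Qed.

Lemma linear_inlB_inr X Y Z (k : {linear (X * Y)%type -> Z}) x y :
  k (lin_inl x) - k (lin_inr y) = k (x, - y).
Proof. by rewrite -linearB; congr (k _); rewrite [LHS]surjective_pairing /= subr0 sub0r. Qed.

End LinearAlgebra.
Arguments lin_inl {R X Y}.
Arguments lin_inr {R X Y}.

Section Pushout.
Variables (F : fieldType) (A B C : lmodType F) (f : {linear A -> B}) (g : {linear A -> C}).

Lemma pushout_exists :
  exists (D : lmodType F) (p : {linear B -> D}) (q : {linear C -> D}),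
    is_pushout f g p q /\ forall b c, p b = q c -> exists a, b = f a /\ c = g a.
Proof.
pose S (x : B * C) := exists a, x = (f a, - g a).
have subS : subspace S.
  split=> [|k _ _ [a ->] [a' ->]]; first by exists 0; rewrite !linear0.
  exists (k *: a + a').
  by rewrite (linearP f) (linearP g) [LHS]surjective_pairing /= opprD scalerN.
have [D [pi [pi_surj pi0]]] := cokernel_exists subS.
exists D, (pi \o lin_inl), (pi \o lin_inr); split; last first.
  move=> b c /= pq; have /pi0 [a [-> /oppr_inj ->]] : pi (b, - c) = 0.
    by rewrite -linear_inlB_inr pq subrr.
  by exists a.
split=> [a|E h k hk]; first by apply/subr0_eq; rewrite /= linear_inlB_inr; apply/pi0; exists a.
have [u uE] : exists u : {linear D -> E}, forall x, u (pi x) = copair h k x.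
  apply: linear_factor_surj => // x /pi0 [a ->].
  by rewrite copairE /= linearN hk subrr.
split.
  by exists u; split=> [b|c]; rewrite /= uE copairE linear0 ?addr0 ?add0r.
move=> u1 u2 u1p u1q u2p u2q d; have [x ->] := pi_surj d.
by rewrite (pair_split x) !linearD (u1p x.1) (u1q x.2) (u2p x.1) (u2q x.2).
Qed.

Lemma pushout_eq_from_span (D : lmodType F) (p : {linear B -> D}) (q : {linear C -> D}) :
  is_pushout f g p q -> forall b c, p b = q c -> exists a, b = f a /\ c = g a.
Proof.
move=> [_ univ] b c pq.
have [D0 [p0 [q0 [[p0q0 _] glue0]]]] := pushout_exists.
have [[u [up uq]] _] := univ _ p0 q0 p0q0.
by apply: glue0; rewrite -up -uq pq.
Qed.

Lemma pushout_injective (D : lmodType F) (p : {linear B -> D}) (q : {linear C -> D}) :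
  is_pushout f g p q -> injective f -> injective q.
Proof.
move=> po f_inj c c' qc; apply/subr0_eq.
have [a [fa0 ->]] : exists a, 0 = f a /\ c - c' = g a.
  by apply: (pushout_eq_from_span po); rewrite linear0 linearB qc subrr.
suff -> : a = 0 by rewrite linear0.
by apply: f_inj; rewrite -fa0 linear0.
Qed.

End Pushout.

Section Corelations.
Variable F : fieldType.
Implicit Types U V W : lmodType F.

Lemma corel_copair_surj U V (c : corel U V) n : exists x, n = copair (cin c) (cout c) x.
Proof. by have [u [v ->]] := corel_epi n; exists (u, v). Qed.

Lemma corel_copair_eq0 U V (c : corel U V) x :
  copair (cin c) (cout c) x = 0 <-> corel_to_linrel c x.1 (- x.2).
Proof. by rewrite /corel_to_linrel copairE linearN opprK. Qed.

Section CorelOfSurjection.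
Variables (U V N : lmodType F) (kappa : {linear (U * V)%type -> N}).
Hypothesis kappa_surj : forall n, exists x, n = kappa x.

Lemma corel_of_surj_epi n : exists u v, n = (kappa \o lin_inl) u + (kappa \o lin_inr) v.
Proof. by have [x ->] := kappa_surj n; exists x.1, x.2; rewrite /= -linearD -pair_split. Qed.

Definition corel_of_surj : corel U V := Corel corel_of_surj_epi.

Lemma corel_of_surjE u v : corel_to_linrel corel_of_surj u v <-> kappa (u, - v) = 0.
Proof. by rewrite /corel_to_linrel /= linear_inlB_inr. Qed.

End CorelOfSurjection.

Lemma corel_to_linrel_iso U V (c1 c2 : corel U V) :
  corel_iso c1 c2 -> linrel_eq (corel_to_linrel c1) (corel_to_linrel c2).
Proof.
move=> [phi [[psi phiK _] [phi_in phi_out]]] u v; rewrite /corel_to_linrel.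
rewrite -phi_in -phi_out -linearB.
split=> [-> | e]; first exact: linear0.
by apply: (can_inj phiK); rewrite e linear0.
Qed.

Lemma is_linrel_corel_to_linrel U V (c : corel U V) : is_linrel (corel_to_linrel c).
Proof.
rewrite /corel_to_linrel; split=> [|a u v u' v' /subr0_eq e /subr0_eq e'].
  by rewrite !linear0 ?subrr ?addr0.
by rewrite (linearP (cin c)) (linearP (cout c)) e e' subrr.
Qed.

Lemma corel_to_linrel_id U : linrel_eq (corel_to_linrel (corel_id U)) (@linrel_id F U).
Proof.
by move=> u v; rewrite /corel_to_linrel /=; split=> [/subr0_eq | ->]; rewrite ?subrr.
Qed.

Lemma corel_comp_exists U V W (c1 : corel U V) (c2 : corel V W) :
  exists c3 : corel U W, is_corel_comp c1 c2 c3.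
Proof.
have [Q [p [q [po _]]]] := pushout_exists (cout c1) (cin c2).
have [I [e [m [e_surj m_inj me]]]] :=
  epi_mono_factorisation (copair (p \o cin c1) (q \o cout c2)).
exists (corel_of_surj e_surj), Q, p, q, m.
do 2 split=> //.
by split=> [u|w] /=; rewrite me copairE linear0 ?addr0 ?add0r.
Qed.

Lemma corel_to_linrel_comp U V W (c1 : corel U V) (c2 : corel V W) (c3 : corel U W) :
  is_corel_comp c1 c2 c3 ->
  linrel_eq (corel_to_linrel c3) (linrel_comp (corel_to_linrel c1) (corel_to_linrel c2)).
Proof.
move=> [Q [p [q [m [po [m_inj [m_in m_out]]]]]]] u w.
rewrite /corel_to_linrel /linrel_comp.
split=> [/subr0_eq e3 | [v [/subr0_eq e1 /subr0_eq e2]]].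
  have [v [e1 e2]] : exists v, cin c1 u = cout c1 v /\ cout c2 w = cin c2 v.
    by apply: (pushout_eq_from_span po); rewrite -m_in -m_out e3.
  by exists v; rewrite e1 e2 !subrr.
apply/eqP; rewrite subr_eq0; apply/eqP/m_inj.
by rewrite m_in m_out e1 -e2 (proj1 po).
Qed.

Lemma corel_to_linrel_faithful U V (c1 c2 : corel U V) :
  linrel_eq (corel_to_linrel c1) (corel_to_linrel c2) -> corel_iso c1 c2.
Proof.
move=> eq12.
have [|phi [phi_bij phiE]] :=
  linear_surj_iso (@corel_copair_surj _ _ c1) (@corel_copair_surj _ _ c2).
  by move=> x; rewrite !corel_copair_eq0.
exists phi; split=> //; split=> [u|v].
  by have := phiE (u, 0); rewrite !copairE !linear0 !addr0.
by have := phiE (0, v); rewrite !copairE !linear0 !add0r.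
Qed.

Lemma corel_to_linrel_full U V (L : linrel U V) :
  is_linrel L -> exists c : corel U V, linrel_eq (corel_to_linrel c) L.
Proof.
move=> [L0 LP].
have subL : subspace (fun x : U * V => L x.1 (- x.2)).
  split=> [|a x y Lx Ly]; first by rewrite /= oppr0.
  by rewrite /= opprD -scalerN; apply: LP.
have [N [pi [pi_surj pi0]]] := cokernel_exists subL.
by exists (corel_of_surj pi_surj) => u v; rewrite corel_of_surjE pi0 /= opprK.
Qed.

End Corelations.

Theorem mainTheorem14 (F : fieldType) :
  (forall (A B C D : lmodType F) (f : {linear A -> B}) (g : {linear A -> C})
          (p : {linear B -> D}) (q : {linear C -> D}),
      is_pushout f g p q -> injective f -> injective q) /\
  (forall (U V : lmodType F) (c1 c2 : corel U V),
      corel_iso c1 c2 -> linrel_eq (corel_to_linrel c1) (corel_to_linrel c2)) /\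
  (forall (U V : lmodType F) (c : corel U V), is_linrel (corel_to_linrel c)) /\
  (forall U : lmodType F, linrel_eq (corel_to_linrel (corel_id U)) (@linrel_id F U)) /\
  (forall (U V W : lmodType F) (c1 : corel U V) (c2 : corel V W),
      exists c3 : corel U W, is_corel_comp c1 c2 c3) /\
  (forall (U V W : lmodType F) (c1 : corel U V) (c2 : corel V W) (c3 : corel U W),
      is_corel_comp c1 c2 c3 ->
      linrel_eq (corel_to_linrel c3)
                (linrel_comp (corel_to_linrel c1) (corel_to_linrel c2))) /\
  (forall (U V : lmodType F) (c1 c2 : corel U V),
      linrel_eq (corel_to_linrel c1) (corel_to_linrel c2) -> corel_iso c1 c2) /\
  (forall (U V : lmodType F) (L : linrel U V),
      is_linrel L -> exists c : corel U V, linrel_eq (corel_to_linrel c) L).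
Proof.
split; first by move=> A B C D f g p q; apply: pushout_injective.
split; first exact: corel_to_linrel_iso.
split; first exact: is_linrel_corel_to_linrel.
split; first exact: corel_to_linrel_id.
split; first exact: corel_comp_exists.
split; first exact: corel_to_linrel_comp.
split; first exact: corel_to_linrel_faithful.
exact: corel_to_linrel_full.
Qed.
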